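(* For any constants $z'\in[0,1]$ and $\alpha'>0$, the set $S_{z',\alpha'}=\{(x_1,\dots,x_n)\in[0,1]^n:\max_{i\in\mathcal V}|x_i-z'|<\alpha'\}$ is finite-time robustly reachable from $[0,1]^n$ under both control protocols (C1) and (C3).
   Context: Fix $n\ge3$, $\mathcal V=\{1,\dots,n\}$, confidence thresholds $r_i\in(0,1]$, belief factors $\omega_i\in(0,1)$, $\eta>0$. States $x(t)=(x_1(t),\dots,x_n(t))\in[0,1]^n$. Neighbor set $\mathcal N_i(t)=\{j:|x_j(t)-x_i(t)|\le r_i\}$ (contains $i$), $\Pi_{[0,1]}(y)=\min\{1,\max\{0,y\}\}$, $x_{\rm ave}(t)=\frac1n\sum_ix_i(t)$. Control protocol (C1): $x_i(t+1)=\Pi_{[0,1]}\big(|\mathcal N_i(t)|^{-1}\sum_{j\in\mathcal N_i(t)}x_j(t)+u_i(t)+b_i(t)\big)$. Control protocol (C3): $x_i(t+1)=\Pi_{[0,1]}\big(\omega_ix_{\rm ave}(t)+\frac{1-\omega_i}{|\mathcal N_i(t)|}\sum_{j\in\mathcal N_i(t)}x_j(t)+u_i(t)+b_i(t)\big)$. Here $\delta_i(t)\in(0,\eta)$ is a chosen parameter, $u_i(t)\in[-\eta+\delta_i(t),\eta-\delta_i(t)]$ a chosen control input, $b_i(t)\in[-\delta_i(t),\delta_i(t)]$ an arbitrary uncertainty; $\delta_i(t),u_i(t)$ may depend on $x(0),\dots,x(t)$. A set $S\subseteq[0,1]^n$ is finite-time robustly reachable from $[0,1]^n$ under a control protocol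 if there exist constants $T>0$ and $\varepsilon\in(0,\eta)$, independent of $x(0)$, such that for every $x(0)\in[0,1]^n$, either $x(0)\in S$, or one can choose $\delta_i(t)\in[\varepsilon,\eta)$ and $u_i(t)\in[-\eta+\delta_i(t),\eta-\delta_i(t)]$ for $i\in\mathcal V$, $0\le t<T$, guaranteeing that for arbitrary $b_i(t)\in[-\delta_i(t),\delta_i(t)]$ there is $t\in[1,T]$ with $x(t)\in S$. *)

From Stdlib Require Import Reals Lra Lia List.
Import ListNotations.
Open Scope R_scope.

(* A state x : nat -> R; only the coordinates i < n (agents 0..n-1,
   i.e. agents 1..n of the paper) are relevant. *)
Definition state := nat -> R.

Definition proj01 (y : R) : R := Rmin 1 (Rmax 0 y).

Definition in_box (n : nat) (x : state) : Prop :=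
  forall i, (i < n)%nat -> 0 <= x i <= 1.

Definition is_nbr (r : nat -> R) (x : state) (i j : nat) : bool :=
  if Rle_dec (Rabs (x j - x i)) (r i) then true else false.

Definition nbrs (n : nat) (r : nat -> R) (x : state) (i : nat) : list nat :=
  filter (is_nbr r x i) (seq 0 n).

Definition sumR (l : list R) : R := fold_right Rplus 0 l.

Definition nbr_avg (n : nat) (r : nat -> R) (x : state) (i : nat) : R :=
  sumR (map x (nbrs n r x i)) / INR (length (nbrs n r x i)).

Definition x_ave (n : nat) (x : state) : R :=
  sumR (map x (seq 0 n)) / INR n.

Inductive protocol := ProtC1 | ProtC3.

Definition step (p : protocol) (n : nat) (r omega : nat -> R)
    (x : state) (u b : nat -> R) : state :=
  fun i =>
    match p with
    | ProtC1 => proj01 (nbr_avg n r x i + u i + b i)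
    | ProtC3 => proj01 (omega i * x_ave n x + (1 - omega i) * nbr_avg n r x i
                    + u i + b i)
    end.

(* A (causal) feedback choice: given time t and the history
   h : nat -> state with h s = x(min s t), returns a value per agent. *)
Definition feedback := nat -> (nat -> state) -> nat -> R.

Fixpoint hist (p : protocol) (n : nat) (r omega : nat -> R) (x0 : state)
    (u : feedback) (b : nat -> nat -> R) (t : nat) : nat -> state :=
  match t with
  | O => fun _ => x0
  | S t' =>
      let H := hist p n r omega x0 u b t' in
      let xn := step p n r omega (H t') (u t' H) (b t') in
      fun s => if Nat.leb s t' then H s else xn
  end.

Definition traj p n r omega x0 u b (t : nat) : state :=
  hist p n r omega x0 u b t t.

Definition robustly_reachable (p : protocol) (n : nat) (r omega : nat -> R)
    (eta : R) (S : state -> Prop) : Prop :=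
  exists (T : nat) (eps : R),
    (1 <= T)%nat /\ 0 < eps < eta /\
    forall x0 : state, in_box n x0 ->
      S x0 \/
      exists delta u : feedback,
        (forall t h i, (t < T)%nat -> (i < n)%nat ->
            eps <= delta t h i < eta /\
            - eta + delta t h i <= u t h i <= eta - delta t h i) /\
        forall b : nat -> nat -> R,
          (forall t i, (t < T)%nat -> (i < n)%nat ->
             - delta t (hist p n r omega x0 u b t) i <= b t i
             <= delta t (hist p n r omega x0 u b t) i) ->
          exists t, (1 <= t <= T)%nat /\ S (traj p n r omega x0 u b t).

Definition S_set (n : nat) (z alpha : R) (x : state) : Prop :=
  in_box n x /\ forall i, (i < n)%nat -> Rabs (x i - z) < alpha.

(* Every update under (C1) and (C3) projects onto [0,1] a convex combination
   of the agents' opinions (a neighbour average, mixed with the global average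
   under (C3)), shifted by u_i + b_i.  A convex combination, and the projection
   onto [0,1] containing z, never increase the largest distance to z.  Steering
   each agent toward z with |u_i| <= eta - eps against noise |b_i| <= eps
   therefore shrinks that largest distance by eta - 2 eps per step until it is
   at most eps; taking eps < alpha, S_{z,alpha} is reached after a number of
   steps depending only on eta and alpha. *)

From Stdlib Require Import Reals List Lra Lia.
Open Scope R_scope.

Definition drift (p : protocol) (n : nat) (r omega : nat -> R) (x : state)
    (i : nat) : R :=
  match p with
  | ProtC1 => nbr_avg n r x i
  | ProtC3 => omega i * x_ave n x + (1 - omega i) * nbr_avg n r x i
  end.

Lemma step_drift p n r omega x u b i :
  step p n r omega x u b i = proj01 (drift p n r omega x i + u i + b i).
Proof. now destruct p. Qed.

Lemma traj_succ p n r omega x0 u b t :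
  traj p n r omega x0 u b (S t) =
  step p n r omega (traj p n r omega x0 u b t)
    (u t (hist p n r omega x0 u b t)) (b t).
Proof.
  unfold traj; cbn [hist]; cbv zeta.
  now replace (Nat.leb (S t) t) with false by (symmetry; apply Nat.leb_gt; lia).
Qed.

Lemma proj01_unit y : 0 <= proj01 y <= 1.
Proof. unfold proj01, Rmin, Rmax; repeat destruct Rle_dec; lra. Qed.

Lemma proj01_dist_le y z : 0 <= z <= 1 -> Rabs (proj01 y - z) <= Rabs (y - z).
Proof.
  intros Hz; unfold proj01, Rmin, Rmax; repeat destruct Rle_dec;
  unfold Rabs; repeat destruct Rcase_abs; lra.
Qed.

Lemma sumR_dist_le (x : state) z D (l : list nat) :
  (forall j, In j l -> Rabs (x j - z) <= D) ->
  Rabs (sumR (map x l) - INR (length l) * z) <= INR (length l) * D.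
Proof.
  induction l as [|j l IH]; intros H; simpl length; simpl map; simpl sumR.
  - simpl; rewrite Rmult_0_l, Rminus_0_r, Rabs_R0; lra.
  - rewrite S_INR.
    assert (Hj := H j (or_introl eq_refl)).
    assert (Hl := IH (fun k hk => H k (or_intror hk))).
    replace (x j + sumR (map x l) - (INR (length l) + 1) * z)
      with ((x j - z) + (sumR (map x l) - INR (length l) * z)) by ring.
    eapply Rle_trans; [apply Rabs_triang | lra].
Qed.

Lemma mean_dist_le (x : state) z D (l : list nat) :
  l <> nil ->
  (forall j, In j l -> Rabs (x j - z) <= D) ->
  Rabs (sumR (map x l) / INR (length l) - z) <= D.
Proof.
  intros Hl H.
  assert (Hlen : 0 < INR (length l)).
  { apply lt_0_INR; destruct l; [contradiction | cbn; lia]. }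
  assert (Hsum := sumR_dist_le x z D l H).
  replace (sumR (map x l) / INR (length l) - z)
    with ((sumR (map x l) - INR (length l) * z) / INR (length l)) by (field; lra).
  unfold Rdiv; rewrite Rabs_mult, Rabs_inv, (Rabs_right (INR _)) by lra.
  apply (Rmult_le_reg_r (INR (length l))); [lra |].
  rewrite Rmult_assoc, Rinv_l by lra; lra.
Qed.

Lemma in_nbrs_self n r (x : state) i :
  (i < n)%nat -> 0 <= r i -> In i (nbrs n r x i).
Proof.
  intros Hi Hr; apply filter_In; split; [apply in_seq; lia |].
  unfold is_nbr; destruct Rle_dec as [| Hnot]; [reflexivity |].
  exfalso; apply Hnot; now rewrite Rminus_diag, Rabs_R0.
Qed.

Section DriftBound.

Variables (n : nat) (r omega : nat -> R) (x : state) (z D : R).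
Hypothesis Hdist : forall j, (j < n)%nat -> Rabs (x j - z) <= D.

Lemma nbr_avg_dist_le i :
  (i < n)%nat -> 0 <= r i -> Rabs (nbr_avg n r x i - z) <= D.
Proof.
  intros Hi Hr; apply mean_dist_le.
  - intros Hnil; assert (Hself := in_nbrs_self n r x i Hi Hr).
    now rewrite Hnil in Hself.
  - intros j Hj; apply filter_In in Hj as [Hj _]; apply in_seq in Hj.
    apply Hdist; lia.
Qed.

Lemma x_ave_dist_le : (0 < n)%nat -> Rabs (x_ave n x - z) <= D.
Proof.
  intros Hn; unfold x_ave; rewrite <- (length_seq n 0) at 2.
  apply mean_dist_le; [destruct n; [lia | discriminate] |].
  intros j Hj; apply in_seq in Hj; apply Hdist; lia.
Qed.

Lemma drift_dist_le p i :
  (i < n)%nat -> 0 <= r i -> 0 <= omega i <= 1 ->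
  Rabs (drift p n r omega x i - z) <= D.
Proof.
  intros Hi Hr Ho.
  assert (Hnbr := nbr_avg_dist_le i Hi Hr).
  destruct p; [exact Hnbr |]; cbn.
  assert (Have := x_ave_dist_le ltac:(lia)).
  replace (omega i * x_ave n x + (1 - omega i) * nbr_avg n r x i - z)
    with (omega i * (x_ave n x - z) + (1 - omega i) * (nbr_avg n r x i - z))
    by ring.
  eapply Rle_trans; [apply Rabs_triang |].
  rewrite !Rabs_mult, (Rabs_pos_eq (omega i)), (Rabs_pos_eq (1 - omega i))
    by lra.
  assert (omega i * Rabs (x_ave n x - z) <= omega i * D)
    by (apply Rmult_le_compat_l; lra).
  assert ((1 - omega i) * Rabs (nbr_avg n r x i - z) <= (1 - omega i) * D)
    by (apply Rmult_le_compat_l; lra).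
  lra.
Qed.

End DriftBound.

Definition saturate (c y : R) : R := Rmax (- c) (Rmin c y).

Lemma saturate_bound c y : 0 <= c -> - c <= saturate c y <= c.
Proof.
  intros Hc; unfold saturate; split; [apply Rmax_l |].
  apply Rmax_lub; [lra | apply Rmin_l].
Qed.

Lemma saturate_toward_dist a z c : 0 <= c ->
  Rabs (a + saturate c (z - a) - z) <= Rmax 0 (Rabs (a - z) - c).
Proof.
  intros Hc; unfold saturate, Rmin; destruct Rle_dec;
  unfold Rmax; repeat destruct Rle_dec; unfold Rabs in *; repeat destruct Rcase_abs;
  lra.
Qed.

Section Steering.

Variables (p : protocol) (n : nat) (r omega : nat -> R) (z c eps : R).
Hypothesis Hn : (0 < n)%nat.
Hypothesis Hr : forall i, (i < n)%nat -> 0 <= r i.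
Hypothesis Ho : forall i, (i < n)%nat -> 0 <= omega i <= 1.
Hypothesis Hz : 0 <= z <= 1.
Hypothesis Heps : 0 <= eps.
Hypothesis Hc : eps <= c.

Definition steer : feedback :=
  fun t h i => saturate c (z - drift p n r omega (h t) i).

Lemma steer_step_dist x b D i :
  (i < n)%nat -> Rabs (b i) <= eps ->
  (forall j, (j < n)%nat -> Rabs (x j - z) <= D) ->
  Rabs (step p n r omega x (fun k => saturate c (z - drift p n r omega x k)) b i
        - z) <= Rmax eps (D - (c - eps)).
Proof.
  intros Hi Hb Hdist; rewrite step_drift.
  eapply Rle_trans; [apply proj01_dist_le, Hz |].
  set (a := drift p n r omega x i).
  assert (Ha : Rabs (a - z) <= D)
    by (apply drift_dist_le; auto).
  assert (Hsat := saturate_toward_dist a z c ltac:(lra)).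
  replace (a + saturate c (z - a) + b i - z)
    with ((a + saturate c (z - a) - z) + b i) by ring.
  eapply Rle_trans; [apply Rabs_triang |].
  revert Hsat; unfold Rmax; repeat destruct Rle_dec; lra.
Qed.

Lemma steer_traj_dist x0 b T :
  in_box n x0 ->
  (forall t i, (t < T)%nat -> (i < n)%nat -> Rabs (b t i) <= eps) ->
  forall t, (t <= T)%nat -> forall i, (i < n)%nat ->
  Rabs (traj p n r omega x0 steer b t i - z) <= Rmax eps (1 - INR t * (c - eps)).
Proof.
  intros Hx0 Hb; induction t as [| t IH]; intros Ht i Hi.
  - cbn; rewrite Rmult_0_l, Rminus_0_r.
    eapply Rle_trans; [| apply Rmax_r].
    specialize (Hx0 i Hi); unfold Rabs; destruct Rcase_abs; lra.
  - rewrite traj_succ.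
    eapply Rle_trans.
    { apply steer_step_dist; [exact Hi | apply Hb; lia |].
      intros j Hj; apply IH; [lia | exact Hj]. }
    rewrite S_INR; unfold Rmax; repeat destruct Rle_dec; lra.
Qed.

End Steering.

Lemma steer_reaches p n r omega eta z alpha :
  (0 < n)%nat ->
  (forall i, (i < n)%nat -> 0 <= r i) ->
  (forall i, (i < n)%nat -> 0 <= omega i <= 1) ->
  0 < eta -> 0 <= z <= 1 -> 0 < alpha ->
  robustly_reachable p n r omega eta (S_set n z alpha).
Proof.
  intros Hn Hr Ho Heta Hz Halpha.
  set (eps := Rmin (eta / 4) (alpha / 2)).
  assert (Heps : 0 < eps) by (unfold eps, Rmin; destruct Rle_dec; lra).
  assert (Heps_eta : eps <= eta / 4) by apply Rmin_l.
  assert (Heps_alpha : eps <= alpha / 2) by apply Rmin_r.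
  set (c := eta - eps).
  destruct (INR_archimed (c - eps) 1) as [N HN]; [unfold c; lra |].
  exists (S N), eps; split; [lia | split; [lra |]].
  intros x0 Hx0; right.
  exists (fun _ _ _ => eps), (steer p n r omega z c); split.
  { intros t h i _ _; split; [lra |].
    assert (Hsat := saturate_bound c (z - drift p n r omega (h t) i)
                      ltac:(unfold c; lra)).
    unfold steer, c in *; lra. }
  intros b Hb; exists (S N); split; [lia |]; split.
  - intros i Hi; rewrite traj_succ, step_drift; apply proj01_unit.
  - intros i Hi.
    eapply Rle_lt_trans.
    { apply (steer_traj_dist p n r omega z c eps Hn Hr Ho Hz) with (T := S N);
        [lra | unfold c; lra | exact Hx0 | | lia | exact Hi].
      intros t j Ht Hj; apply Rabs_le, Hb; assumption. }
    rewrite S_INR.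
    assert (1 - (INR N + 1) * (c - eps) < eps) by (unfold c in *; nra).
    unfold Rmax; destruct Rle_dec; lra.
Qed.

Theorem lemma2 (n : nat) (r omega : nat -> R) (eta z alpha : R) :
  (3 <= n)%nat ->
  (forall i, (i < n)%nat -> 0 < r i <= 1) ->
  (forall i, (i < n)%nat -> 0 < omega i < 1) ->
  0 < eta ->
  0 <= z <= 1 -> 0 < alpha ->
  robustly_reachable ProtC1 n r omega eta (S_set n z alpha) /\
  robustly_reachable ProtC3 n r omega eta (S_set n z alpha).
Proof.
  intros Hn Hr Ho Heta Hz Halpha.
  assert (Hn0 : (0 < n)%nat) by lia.
  assert (Hr0 : forall i, (i < n)%nat -> 0 <= r i)
    by (intros i Hi; specialize (Hr i Hi); lra).
  assert (Ho0 : forall i, (i < n)%nat -> 0 <= omega i <= 1)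
    by (intros i Hi; specialize (Ho i Hi); lra).
  split; apply steer_reaches; assumption.
Qed.
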